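(* Let $\succ=(\succ_s)_{s\in S}$ be a priority profile in which every $\succ_s$ is a partial order on $I$, and let $\mu$ be a stable matching for $\succ$. Define the profile $\succ^\mu=(\succ^\mu_s)_{s\in S}$ by $\succ^\mu_s=\succ_s\cup\{(i,j)\in I\times I:\ \mu(i)=s\ \text{and}\ sP_j\mu(j)\}$. Then $$f^{\succ}\cap\big(d(\mu)\cup\{\mu\}\big)=\bigcup_{\succ'\in\mathcal{E}(\succ^\mu)}\{EA(\succ,\succ')\},$$ where $d(\mu)$ is the set of matchings that Pareto dominate $\mu$.
   Context: A partial order on $I$ is an asymmetric and transitive relation; a total order is a partial order that is also negatively transitive and complete. School choice setup: $I$ finite set of students ($|I|\ge 3$), $S$ finite set of schools; each student $i$ has a total order $P_i$ on $S\cup\{\emptyset\}$ ($sR_is'$ means $sP_is'$ or $s=s'$); each school $s$ has capacity $q_s\in\mathbb{Z}_{++}$ and an asymmetric priority relation $\succ_s$ on $I$. A matching $\mu$ assigns each $i$ to $\mu(i)\in S\cup\{\emptyset\}$ with $|\mu(s)|\le q_s$, $\mu(s)=\{i:\mu(i)=s\}$. $\mu$ is stable for $\succ$ if individually rational ($\mu(i)R_i\emptyset$), non-wasteful ($sP_i\mu(i)$ implies $|\mu(s)|=q_s$) and fair (no $s$, $j\in\mu(s)$, $i\notin\mu(s)$ with $sR_i\mu(i)$ and $(i,j)\in\succ_s$). Pareto dominance: $\mu'(i)R_i\mu(i)$ for all $i$, strict for some $i$. An SOSM for $\succ$ is a stable matching not Pareto dominated by any stable matching; $f^\succ$ is the set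 of SOSMs. An extension of an asymmetric relation $\succ_s$ is a total order on $I$ containing it; for a profile $\rhd=(\rhd_s)$, $\mathcal{E}(\rhd)$ is the set of profiles of extensions of the $\rhd_s$. For a profile of total orders the SOSM is unique (student-proposing deferred acceptance outcome). EADAM (Tang–Yu version): given $\succ$ and a profile $\succ'$ of total orders extending $\succ$, Round 0: compute the SOSM for $\succ'$. Round $k\ge1$: (1) with respect to the current problem and the matching of Round $k-1$, call a remaining school $s$ underdemanded if no remaining student $i$ has $sP_i\mu(i)$; fix the assignments at underdemanded schools, and remove these schools, the students matched to them, and the remaining students who are unmatched; (2) for each removed student $i$ and each remaining school $s$ with $sP_i(\text{assignment of }i)$, and each remaining student $j$ with $(i,j)\in\succ_s$, delete $s$ from $j$'s preference list; (3) compute the SOSM for the subproblem of remaining schools and students, with modified preferences and priorities $\succ'$ restricted. Stop when all schools are removed; $EA(\succ,\succ')$ denotes the matching given by all fixed assignments. *)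

From mathcomp Require Import all_boot.

Set Implicit Arguments.
Unset Strict Implicit.
Unset Printing Implicit Defensive.

(* Students: finType I; schools: finType S; the "null school"
   (being unassigned) is None : option S. *)

Section Orders.
Variable T : finType.
Definition asym_rel (r : rel T) := forall x y, r x y -> ~~ r y x.
Definition trans_rel (r : rel T) := forall x y z, r x y -> r y z -> r x z.
Definition partial_order (r : rel T) := asym_rel r /\ trans_rel r.
Definition total_order (r : rel T) :=
  [/\ partial_order r,
      (forall x y z, ~~ r x y -> ~~ r y z -> ~~ r x z) &
      (forall x y, x != y -> r x y || r y x)].
Definition extension (r r' : rel T) := total_order r' /\ (forall x y, r x y -> r' x y).
End Orders.

Section School.
Variables (I S : finType) (P : I -> rel (option S)) (q : S -> nat).

Definition Rw (i : I) (x y : option S) := P i x y || (x == y).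

Definition load (Is : {set I}) (mu : {ffun I -> option S}) (s : S) :=
  #|[set i in Is | mu i == Some s]|.

(* Generic (sub)problem: remaining students Is, remaining schools Ss,
   A i s = false means s has been deleted from i's preference list. *)
Definition sub_matching (Is : {set I}) (Ss : {set S}) (mu : {ffun I -> option S}) :=
  [/\ (forall i, i \notin Is -> mu i = None),
      (forall i s, mu i = Some s -> s \in Ss) &
      (forall s, s \in Ss -> load Is mu s <= q s)].

Definition sub_stable (pri : S -> rel I) (Is : {set I}) (Ss : {set S})
    (A : I -> S -> bool) (mu : {ffun I -> option S}) :=
  [/\ sub_matching Is Ss mu,
      (forall i s, i \in Is -> mu i = Some s -> A i s /\ P i (Some s) None),
      (forall i s, i \in Is -> s \in Ss -> A i s -> P i (Some s) (mu i) ->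
                   load Is mu s = q s) &
      (forall i j s, i \in Is -> j \in Is -> s \in Ss -> A i s ->
         mu j = Some s -> mu i != Some s -> Rw i (Some s) (mu i) ->
         pri s i j -> False)].

Definition sub_dominates (Is : {set I}) (mu' mu : {ffun I -> option S}) :=
  (forall i, i \in Is -> Rw i (mu' i) (mu i)) /\
  (exists2 i, i \in Is & P i (mu' i) (mu i)).

Definition sub_SOSM (pri : S -> rel I) (Is : {set I}) (Ss : {set S}) (A : I -> S -> bool) (mu : {ffun I -> option S}) :=
  sub_stable pri Is Ss A mu /\
  (forall mu', sub_stable pri Is Ss A mu' -> ~ sub_dominates Is mu' mu).

Definition allA : I -> S -> bool := fun _ _ => true.
Definition matching (mu : {ffun I -> option S}) := sub_matching setT setT mu.
Definition stable (pri : S -> rel I) (mu : {ffun I -> option S}) := sub_stable pri setT setT allA mu.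
Definition dominates (mu' mu : {ffun I -> option S}) := sub_dominates setT mu' mu.
(* mu \in f^pri *)
Definition SOSM (pri : S -> rel I) (mu : {ffun I -> option S}) := sub_SOSM pri setT setT allA mu.
(* mu' \in d(mu) *)
Definition in_d (mu mu' : {ffun I -> option S}) := matching mu' /\ dominates mu' mu.

Definition mu_profile (pri : S -> rel I) (mu : {ffun I -> option S}) : S -> rel I :=
  fun s i j => pri s i j || ((mu i == Some s) && P j (Some s) (mu j)).

Definition in_ext (rhd pri' : S -> rel I) := forall s, extension (rhd s) (pri' s).

Section EADAM.
Variables (pri pri' : S -> rel I).

Definition underdemanded (Ir : {set I}) (Sr : {set S}) (A : I -> S -> bool)
    (mu : {ffun I -> option S}) : {set S} :=
  [set s in Sr | [forall i in Ir, ~~ (A i s && P i (Some s) (mu i))]].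

Definition removed (Ir : {set I}) (Sr : {set S}) (A : I -> S -> bool)
    (mu : {ffun I -> option S}) : {set I} :=
  [set i in Ir | (mu i == None) ||
                 [exists s in underdemanded Ir Sr A mu, mu i == Some s]].

Definition new_allowed (Ir : {set I}) (Sr : {set S}) (A : I -> S -> bool) (mu : {ffun I -> option S}) : I -> S -> bool :=
  fun j s => A j s &&
    [forall i in removed Ir Sr A mu, ~~ [&& A i s, P i (Some s) (mu i) & pri s i j]].

Definition fix_assign (Ir : {set I}) (Sr : {set S}) (A : I -> S -> bool) (mu nu : {ffun I -> option S}) : {ffun I -> option S} :=
  [ffun i => if i \in removed Ir Sr A mu then mu i else nu i].

(* ea_from Ir Sr A mu nu res : starting a round k >= 1 with remaining students Ir,
   remaining schools Sr, current (modified) lists A, matching mu of round k-1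
   and fixed assignments nu so far, the algorithm ends with result res. *)
Inductive ea_from : {set I} -> {set S} -> (I -> S -> bool) ->
    {ffun I -> option S} -> {ffun I -> option S} -> {ffun I -> option S} -> Prop :=
| ea_stop Ir Sr A mu nu :
    Sr = set0 ->
    ea_from Ir Sr A mu nu [ffun i => if i \in Ir then mu i else nu i]
| ea_step Ir Sr A mu nu mu' res :
    Sr != set0 ->
    sub_SOSM pri' (Ir :\: removed Ir Sr A mu) (Sr :\: underdemanded Ir Sr A mu)
             (new_allowed Ir Sr A mu) mu' ->
    ea_from (Ir :\: removed Ir Sr A mu) (Sr :\: underdemanded Ir Sr A mu)
            (new_allowed Ir Sr A mu) mu' (fix_assign Ir Sr A mu nu) res ->
    ea_from Ir Sr A mu nu res.

Definition EA (res : {ffun I -> option S}) :=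
  exists mu0, sub_SOSM pri' setT setT allA mu0 /\
              ea_from setT setT allA mu0 [ffun => None] res.
End EADAM.
End School.

(* Weakly better stable matchings fill every
      school equally.
   3. An invariant of EADAM runs.  It yields that the outcome of any run is stable
      for the original priorities, weakly improves on the Round 0 matching, and is
      not weakly improved upon by any other stable matching agreeing with the
      fixed assignments.  A trading-cycle argument shows that every round removes
      a student or a school, so runs always exist.
   4. For a stable nu weakly improving on mu we build an extension of succ^mu for
      which nu is stable.  Both inclusions of the corollary then follow by
      comparing the EADAM outcome with the student-optimal stable matching. *)

From mathcomp Require Import all_boot zify.

Set Implicit Arguments.
Unset Strict Implicit.
Unset Printing Implicit Defensive.

Section StrictTotal.
Variables (T : finType) (r : rel T).
Hypothesis r_po : partial_order r.
Hypothesis r_tot : forall x y, x != y -> r x y || r y x.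

Lemma r_irr x : ~~ r x x.
Proof. by case: r_po => asy _; apply/negP => h; move: (asy _ _ h); rewrite h. Qed.

Lemma exists_greatest (X : pred T) x0 : X x0 ->
  exists2 x, X x & forall y, X y -> y != x -> r x y.
Proof.
move=> X0.
case: (arg_minnP (fun x => #|[set y | X y && r y x]|) X0) => x Xx Hmin.
exists x => // y Xy nyx.
case/orP: (r_tot nyx) => // ryx; exfalso.
have: #|[set z | X z && r z y]| < #|[set z | X z && r z x]|.
  apply: proper_card; apply/properP; split.
    apply/subsetP => z; rewrite !inE => /andP[-> rzy] /=.
    by case: r_po => _ tr; apply: tr rzy ryx.
  by exists y; rewrite !inE ?Xy ?ryx ?(negbTE (r_irr y)).
by rewrite ltnNge Hmin.
Qed.

Lemma exists_least (X : pred T) x0 : X x0 ->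
  exists2 x, X x & forall y, X y -> y != x -> r y x.
Proof.
move=> X0.
case: (arg_minnP (fun x => #|[set y | X y && r x y]|) X0) => x Xx Hmin.
exists x => // y Xy nyx.
case/orP: (r_tot nyx) => // ryx; exfalso.
have: #|[set z | X z && r y z]| < #|[set z | X z && r x z]|.
  apply: proper_card; apply/properP; split.
    apply/subsetP => z; rewrite !inE => /andP[-> rzy] /=.
    by case: r_po => _ tr; apply: tr ryx rzy.
  by exists y; rewrite !inE ?Xy ?ryx ?(negbTE (r_irr y)).
by rewrite ltnNge Hmin.
Qed.

Definition rank_in (X : {set T}) x := #|[set y in X | r y x]|.

Lemma rank_in_small n (X : {set T}) :
  minn n #|X| <= #|[set x in X | rank_in X x < n]|.
Proof.
elim: n X => [|n IH] X; first by rewrite min0n.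
case: (set_0Vmem X) => [->|[x0 Xx0]]; first by rewrite cards0 minn0.
case: (exists_greatest (X := fun z => z \in X) Xx0) => x Xx Htop.
set X' := X :\ x.
have rank_succ y : y \in X' -> rank_in X y = (rank_in X' y).+1.
  move=> yX'; rewrite /rank_in (cardsD1 x [set z in X | r z y]) inE Xx.
  move: yX'; rewrite !inE => /andP[nyx yX]; rewrite (Htop y yX nyx) /=.
  by rewrite add1n; congr (_.+1); apply: eq_card => z; rewrite !inE andbA.
have -> : [set z in X | rank_in X z < n.+1] = x |: [set z in X' | rank_in X' z < n].
  apply/setP => z; rewrite !inE.
  case: (eqVneq z x) => [->|nzx] /=.
    have -> : rank_in X x = 0.
      apply/eqP; rewrite /rank_in cards_eq0; apply/eqP/setP => y.
      rewrite !inE; apply/negbTE; apply/negP => /andP[yX ryx].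
      case: (eqVneq y x) => [e|nyx]; first by move: ryx; rewrite e (negbTE (r_irr x)).
      by case: r_po => asy _; move: (asy _ _ ryx); rewrite Htop.
    by rewrite Xx.
  case zX: (z \in X) => //=.
  by rewrite rank_succ ?inE ?nzx ?zX // ltnS.
rewrite cardsU1 !inE eqxx /=.
have := IH X'; rewrite (cardsD1 x X) Xx /= -/X'.
by rewrite add1n minnSS.
Qed.
End StrictTotal.

Section TotalOrder.
Variables (T : finType) (r : rel T).
Hypothesis r_to : total_order r.

Lemma to_asym x y : r x y -> ~~ r y x.
Proof. by case: r_to => [[a _] _ _]; apply: a. Qed.
Lemma to_trans x y z : r x y -> r y z -> r x z.
Proof. by case: r_to => [[_ t] _ _]; apply: t. Qed.
Lemma to_tot x y : x != y -> r x y || r y x.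
Proof. by case: r_to => _ _ t; apply: t. Qed.
Lemma to_irr x : ~~ r x x.
Proof. by apply/negP => e; move: (to_asym e); rewrite e. Qed.
End TotalOrder.

(* Every strict partial order C on a finite type has a linear extension: order by
   decreasing number of C-successors, breaking ties by enumeration rank. *)
Section LinearExtension.
Variables (T : finType) (C : rel T).
Hypothesis C_trans : forall x y z, C x y -> C y z -> C x z.
Hypothesis C_irr : forall x, ~~ C x x.

Definition successors x := #|[set y | C x y]|.
Definition lin_key x := (#|T| - successors x) * #|T| + enum_rank x.
Definition linearize : rel T := fun x y => lin_key x < lin_key y.

Lemma lin_key_inj : injective lin_key.
Proof.
move=> x y e; apply: enum_rank_inj; apply: val_inj => /=.
by have := congr1 (modn^~ #|T|) e; rewrite /lin_key /= !modnMDl !modn_small.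
Qed.

Lemma linearize_total : total_order linearize.
Proof.
rewrite /linearize; split; first split.
- by move=> x y h; rewrite -leqNgt ltnW.
- by move=> x y z; apply: ltn_trans.
- by move=> x y z; rewrite -!leqNgt => h1 h2; exact: leq_trans h2 h1.
- by move=> x y nxy; rewrite -neq_ltn; apply: contra nxy => /eqP /lin_key_inj ->.
Qed.

Lemma successors_lt x y : C x y -> successors y < successors x.
Proof.
move=> cxy; apply: proper_card; apply/properP; split.
  by apply/subsetP => z; rewrite !inE => cyz; apply: C_trans cxy cyz.
by exists y; rewrite !inE ?cxy ?(negbTE (C_irr y)).
Qed.

Lemma linearize_ext x y : C x y -> linearize x y.
Proof.
move=> cxy; have h := successors_lt cxy.
have hx : successors x <= #|T| by apply: max_card.
have lt : #|T| - successors x < #|T| - successors y by lia.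
rewrite /linearize /lin_key; apply: (@leq_trans ((#|T| - successors x).+1 * #|T|)).
  by rewrite mulSn [X in X < _]addnC ltn_add2r ltn_ord.
by apply: leq_trans (leq_addr _ _); rewrite leq_mul2r lt orbT.
Qed.
End LinearExtension.

Lemma sum_le_eq (T : finType) (A : {set T}) (f g : T -> nat) :
  (forall s, s \in A -> f s <= g s) ->
  \sum_(s in A) g s <= \sum_(s in A) f s ->
  forall s, s \in A -> f s = g s.
Proof.
move=> le hsum s sA; apply/eqP; rewrite eqn_leq le //=; apply/negP => lt.
have: \sum_(t in A) f t < \sum_(t in A) g t.
  rewrite (bigD1 s) //= [X in _ < X](bigD1 s) //=.
  rewrite -addSn; apply: leq_add; first by rewrite ltnNge; apply/negP.
  by apply: leq_sum => t /andP[tA _]; apply: le.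
by rewrite ltnNge hsum.
Qed.

Section InvariantCycle.
Variables (T : finType) (f : T -> T) (D : {set T}).
Hypothesis f_D : forall x, x \in D -> f x \in D.
Hypothesis D_neq0 : D != set0.

Definition iter_image n : {set T} := iter n (fun X : {set T} => f @: X) D.

Lemma iter_image_sub n : iter_image n.+1 \subset iter_image n.
Proof.
elim: n => [|n IH] /=; last exact: imsetS.
by apply/subsetP => y /imsetP [x xD ->]; apply: f_D.
Qed.

Lemma iter_image_neq0 n : iter_image n != set0.
Proof.
elim: n => [//|n IH] /=; case/set0Pn: IH => x xE.
by apply/set0Pn; exists (f x); apply: imset_f.
Qed.

Lemma iter_image_card n : (forall k, k < n -> #|iter_image k.+1| < #|iter_image k|) ->
  #|iter_image n| + n <= #|D|.
Proof.
elim: n => [|n IH] h; first by rewrite addn0.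
have := IH (fun k kn => h k (ltnW kn)); rewrite addnS.
by move=> h2; apply: leq_trans h2; rewrite ltn_add2r; apply: h.
Qed.

Lemma invariant_cycle : exists E : {set T},
  [/\ E \subset D, E != set0, f @: E = E & {in E &, injective f}].
Proof.
have [k hk] : exists k : 'I_#|T|.+1, #|iter_image k| <= #|iter_image k.+1|.
  apply/existsP; apply/contraT => /existsPn h.
  have hh k : k < #|T|.+1 -> #|iter_image k.+1| < #|iter_image k|.
    by move=> kn; move: (h (Ordinal kn)); rewrite -ltnNge.
  have := iter_image_card hh; move=> /leq_trans/(_ (subset_leq_card (subsetT D))).
  by rewrite cardsT addnS ltnNge leq_addl.
have EE : iter_image k.+1 = iter_image k by apply/eqP; rewrite eqEcard iter_image_sub hk.
exists (iter_image k); split.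
- elim: (nat_of_ord k) => [|n IH]; first exact: subxx.
  exact: subset_trans (iter_image_sub n) IH.
- exact: iter_image_neq0.
- exact: EE.
- by apply/imset_injP; rewrite [f @: _]EE.
Qed.
End InvariantCycle.

Section Preferences.
Variables (I S : finType) (P : I -> rel (option S)).
Hypothesis HP : forall i, total_order (P i).

Lemma P_asym i x y : P i x y -> ~~ P i y x. Proof. exact: to_asym. Qed.
Lemma P_irr i x : ~~ P i x x. Proof. exact: to_irr. Qed.
Lemma P_trans i x y z : P i x y -> P i y z -> P i x z. Proof. exact: to_trans. Qed.
Lemma P_tot i x y : x != y -> P i x y || P i y x. Proof. exact: to_tot. Qed.

Lemma Rw_refl i x : Rw P i x x.
Proof. by rewrite /Rw eqxx orbT. Qed.
Lemma P_Rw i x y : P i x y -> Rw P i x y.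
Proof. by rewrite /Rw => ->. Qed.
Lemma Rw_P i x y : Rw P i x y -> x != y -> P i x y.
Proof. by rewrite /Rw => /orP[//|/eqP ->]; rewrite eqxx. Qed.
Lemma Rw_P_trans i x y z : Rw P i x y -> P i y z -> P i x z.
Proof. by rewrite /Rw => /orP[h1 h2|/eqP -> //]; apply: P_trans h1 h2. Qed.
Lemma P_Rw_trans i x y z : P i x y -> Rw P i y z -> P i x z.
Proof. by move=> h1; rewrite /Rw => /orP[h2|/eqP <- //]; apply: P_trans h1 h2. Qed.
Lemma Rw_trans i x y z : Rw P i x y -> Rw P i y z -> Rw P i x z.
Proof. by move=> h1 /orP[h2|/eqP <- //]; apply: P_Rw; apply: Rw_P_trans h1 h2. Qed.
Lemma Rw_notP i x y : Rw P i x y -> ~~ P i y x.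
Proof. by move/orP=> [h|/eqP ->]; [apply: P_asym|apply: P_irr]. Qed.
End Preferences.

Section SubproblemStability.
Variables (I S : finType) (P : I -> rel (option S)) (q : S -> nat).
Hypothesis HP : forall i, total_order (P i).
Variables (pr : S -> rel I) (Is : {set I}) (Ss : {set S}) (A : I -> S -> bool).
Local Notation stable_in := (sub_stable P q pr Is Ss A).

Lemma st_out m i : stable_in m -> i \notin Is -> m i = None.
Proof. by case=> [[h _ _] _ _ _]; apply: h. Qed.
Lemma st_Ss m i s : stable_in m -> m i = Some s -> s \in Ss.
Proof. by case=> [[_ h _] _ _ _]; apply: h. Qed.
Lemma st_Is m i s : stable_in m -> m i = Some s -> i \in Is.
Proof. by move=> ms e; apply/negPn/negP => ni; move: (st_out ms ni); rewrite e. Qed.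
Lemma st_cap m s : stable_in m -> s \in Ss -> load Is m s <= q s.
Proof. by case=> [[_ _ h] _ _ _]; apply: h. Qed.
Lemma st_A m i s : stable_in m -> m i = Some s -> A i s.
Proof. by move=> ms e; case: (ms) => [_ h _ _]; case: (h i s (st_Is ms e) e). Qed.
Lemma st_PN m i s : stable_in m -> m i = Some s -> P i (Some s) None.
Proof. by move=> ms e; case: (ms) => [_ h _ _]; case: (h i s (st_Is ms e) e). Qed.
Lemma st_nw m i s : stable_in m -> i \in Is -> s \in Ss -> A i s ->
  P i (Some s) (m i) -> load Is m s = q s.
Proof. by case=> [_ _ h _]; apply: h. Qed.
Lemma st_fair m i j s : stable_in m -> i \in Is -> s \in Ss -> A i s ->
  m j = Some s -> P i (Some s) (m i) -> pr s i j -> False.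
Proof.
move=> ms iI sS Ais mj Pi rij; case: (ms) => [_ _ _ h].
apply: (h i j s iI (st_Is ms mj) sS Ais mj _ (P_Rw Pi) rij).
by apply/eqP => e; move: Pi; rewrite e (negbTE (P_irr HP _ _)).
Qed.

(* Stable assignments are acceptable, so only None is weakly below None. *)
Lemma st_matched m (m' : {ffun I -> option S}) i : stable_in m -> Rw P i (m' i) (m i) -> m' i = None -> m i = None.
Proof.
move=> ms + e; rewrite e; case e': (m i) => [t|] // h.
by move: (Rw_notP HP h); rewrite (st_PN ms e').
Qed.

Lemma card_sum (b : pred I) : #|[set i in Is | b i]| = \sum_(i in Is) b i.
Proof.
rewrite -sum1_card (eq_bigl (fun i => (i \in Is) && b i)); last by move=> i; rewrite inE.
by rewrite big_mkcondr /=; apply: eq_bigr => i _; case: (b i).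
Qed.

Lemma sum_load (m : {ffun I -> option S}) :
  (forall i s, i \in Is -> m i = Some s -> s \in Ss) ->
  \sum_(s in Ss) load Is m s = #|[set i in Is | m i != None]|.
Proof.
move=> hm; rewrite /load (eq_bigr (fun s => \sum_(i in Is) (m i == Some s))); last first.
  by move=> s _; rewrite card_sum.
rewrite exchange_big card_sum; apply: eq_bigr => i iI.
case e: (m i) => [s|] /=; last by rewrite big1.
rewrite (bigD1 s) ?(hm i s iI e) //= eqxx big1 // => t /andP[_ nts].
by rewrite eq_sym; case: eqP => // -[]; move/eqP: nts.
Qed.

Lemma load_le_or_newcomer (m m' : {ffun I -> option S}) s :
  load Is m s < load Is m' s ->
  exists2 k, k \in Is & (m' k == Some s) && (m k != Some s).
Proof.
move=> lt; apply/exists_inP; apply/contraT => /exists_inPn h.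
suff: load Is m' s <= load Is m s by rewrite leqNgt lt.
apply: subset_leq_card; apply/subsetP => k; rewrite !inE => /andP[kI mk].
by rewrite kI /=; move: (h k kI); rewrite (eqP mk) eqxx /= negbK.
Qed.

Lemma load_eq m m' : stable_in m -> stable_in m' ->
  (forall i, i \in Is -> Rw P i (m' i) (m i)) ->
  forall s, s \in Ss -> load Is m' s = load Is m s.
Proof.
move=> ms m's R; have le s : s \in Ss -> load Is m' s <= load Is m s.
  move=> sS; rewrite leqNgt; apply/negP => lt.
  case: (load_le_or_newcomer lt) => k kI /andP[/eqP mk nk].
  have Pk : P k (Some s) (m k) by apply: Rw_P; [rewrite -mk; apply: R|rewrite eq_sym].
  by move: (st_cap m's sS); rewrite -(st_nw ms kI sS (st_A m's mk) Pk) leqNgt lt.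
apply: sum_le_eq le _.
have inSs m0 : stable_in m0 -> forall i s, i \in Is -> m0 i = Some s -> s \in Ss.
  by move=> h0 i s _; apply: st_Ss h0.
rewrite (sum_load (inSs m' m's)) (sum_load (inSs m ms)).
apply: subset_leq_card; apply/subsetP => i; rewrite !inE => /andP[iI mi]; rewrite iI /=.
by apply: contra mi => /eqP e; apply/eqP; apply: st_matched ms (R i iI) e.
Qed.
End SubproblemStability.

(* Student-proposing deferred acceptance on a subproblem with total priorities.
   We work with a set R of rejected (student, school) pairs: every student proposes
   to her best acceptable school not yet rejecting her, and a school rejects a
   proposer when at least q s proposers have higher priority.  Iterating from the
   empty set reaches a fixed point, whose proposals form a stable matching that
   every student weakly prefers to any stable matching. *)
Section DeferredAcceptance.
Variables (I S : finType) (P : I -> rel (option S)) (q : S -> nat).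
Hypothesis HP : forall i, total_order (P i).
Variables (pr : S -> rel I) (Is : {set I}) (Ss : {set S}) (A : I -> S -> bool).
Hypothesis Hpr : forall s, total_order (pr s).
Local Notation stable_in := (sub_stable P q pr Is Ss A).

Definition acceptable (R : {set I * S}) i s :=
  [&& i \in Is, s \in Ss, A i s, P i (Some s) None & (i, s) \notin R].
Definition best R i s :=
  acceptable R i s && [forall t, acceptable R i t ==> Rw P i (Some s) (Some t)].
Definition proposal R i : option S := [pick s | best R i s].
Definition proposers R s := [set j | proposal R j == Some s].
Definition rejections R := [set p : I * S | (proposal R p.1 == Some p.2) &&
   (q p.2 <= #|[set j in proposers R p.2 | pr p.2 j p.1]|)].
Definition da_step R := R :|: rejections R.
Definition rejected_after n := iter n da_step set0.

Definition rejected_unstable (R : {set I * S}) := forall i s, (i, s) \in R ->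
  forall m, stable_in m -> m i != Some s.
Definition rejection_supported (R : {set I * S}) := forall i s, (i, s) \in R ->
  q s <= #|[set j in proposers R s | pr s j i]|.

Lemma proposalP R i s : proposal R i = Some s -> best R i s.
Proof. by rewrite /proposal; case: pickP => // x h [<-]. Qed.

Lemma proposal_acc R i s : proposal R i = Some s -> acceptable R i s.
Proof. by move/proposalP/andP=> []. Qed.

Lemma proposalN R i : proposal R i = None -> forall s, ~~ acceptable R i s.
Proof.
rewrite /proposal; case: pickP => // h _ s; apply/negP => a.
have po : partial_order (fun s t : S => P i (Some s) (Some t)).
  by split=> [x y|x y z]; [apply: (P_asym HP)|apply: (P_trans HP)].
have tot (x y : S) : x != y -> P i (Some x) (Some y) || P i (Some y) (Some x).
  by move=> n; apply: (P_tot HP); apply: contra n => /eqP [->].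
case: (exists_greatest po tot (X := acceptable R i) a) => t at_ ht.
move: (h t); rewrite /best at_ /=; move/negbT/negP; apply.
apply/forallP => u; apply/implyP => au.
by case: (eqVneq u t) => [->|nut]; [exact: Rw_refl|apply: P_Rw; exact: ht].
Qed.

Lemma proposal_opt R i t : acceptable R i t -> Rw P i (proposal R i) (Some t).
Proof.
case e: (proposal R i) => [s|] a; last by move: (proposalN e t); rewrite a.
by move: (proposalP e) => /andP[_ /forallP /(_ t)]; rewrite a.
Qed.

Lemma rejections_new R p : p \in rejections R -> p \notin R.
Proof.
case: p => i s; rewrite inE /= => /andP[/eqP h _].
by move: (proposal_acc h) => /and5P[].
Qed.

Lemma proposal_step R j s : proposal R j = Some s -> (j, s) \notin rejections R ->
  proposal (da_step R) j = Some s.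
Proof.
move=> h nr.
have ea t : acceptable (da_step R) j t = acceptable R j t.
  rewrite /acceptable /da_step inE negb_or.
  case: (boolP ((j, t) \in rejections R)) => [jt|]; last by rewrite andbT.
  by move: (jt); rewrite inE /= h => /andP[/eqP [e] _]; move: nr; rewrite e jt.
rewrite -h /proposal; apply: eq_pick => t; rewrite /best ea; congr andb.
by apply: eq_forallb => u; rewrite ea.
Qed.

Lemma supported_step R : rejection_supported R -> rejection_supported (da_step R).
Proof.
move=> supp i s irs; set X := proposers R s.
have base : q s <= #|[set j in X | pr s j i]|.
  move: irs; rewrite /da_step inE => /orP[h|]; first exact: supp.
  by rewrite inE /= => /andP[_ ->].
have Xq : q s <= #|X|.
  apply: leq_trans base _; apply: subset_leq_card; apply/subsetP => j.
  by rewrite inE => /andP[].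
have po : partial_order (pr s) by case: (Hpr s).
(* the q s highest-ranked proposers are not rejected and stay above i *)
have K := rank_in_small po (to_tot (Hpr s)) (q s) X.
rewrite (minn_idPl Xq) in K; apply: leq_trans K _.
apply: subset_leq_card; apply/subsetP => j; rewrite !inE => /andP[jX ab].
have jnr : (j, s) \notin rejections R.
  by rewrite inE /= negb_and -ltnNge; apply/orP; right.
move/eqP: (jX) => pj; rewrite (proposal_step pj jnr) eqxx /=.
apply/negPn/negP => nji; move: ab; rewrite ltnNge; move/negP; apply.
apply: leq_trans base _; apply: subset_leq_card; apply/subsetP => k.
rewrite !inE => /andP[kX rki]; rewrite kX /=.
case: (eqVneq j i) => [->//|nji'].
case/orP: (to_tot (Hpr s) nji') => h; first by rewrite h in nji.
exact: (to_trans (Hpr s)) rki h.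
Qed.

Lemma unstable_step R : rejected_unstable R -> rejected_unstable (da_step R).
Proof.
move=> unst i s irs m ms; move: irs; rewrite /da_step inE => /orP[h|h]; first exact: unst.
apply/eqP => mis; move: h; rewrite inE /= => /andP[/eqP pis hq].
set T := [set j in proposers R s | pr s j i] in hq.
have [j jT mj] : exists2 j, j \in T & m j != Some s.
  apply/exists_inP; apply/contraT => /exists_inPn hall.
  have iI := st_Is ms mis; have sS := st_Ss ms mis.
  suff: #|T| < load Is m s by rewrite ltnNge (leq_trans (st_cap ms sS) hq).
  rewrite /load [X in _ < X](cardsD1 i) inE iI mis eqxx add1n ltnS.
  apply: subset_leq_card; apply/subsetP => k kT.
  have /eqP mk := negbNE (hall k kT); move: kT; rewrite inE => /andP[_ rki].
  rewrite !inE mk eqxx (st_Is ms mk) /= andbT.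
  by apply/eqP => e; move: rki; rewrite e (negbTE (to_irr (Hpr s) i)).
move: jT; rewrite !inE => /andP[/eqP pj rji].
have /and5P[jI sS Ajs Pjs _] := proposal_acc pj.
(* m j never rejected j, so j prefers her proposal s to m j and envies i *)
have Pm : P j (Some s) (m j).
  case e: (m j) => [t|] //.
  have ajt : acceptable R j t.
    rewrite /acceptable jI (st_Ss ms e) (st_A ms e) (st_PN ms e) /=.
    by apply/negP => jtR; move: (unst _ _ jtR m ms); rewrite e eqxx.
  apply: Rw_P; first by rewrite -pj; apply: proposal_opt ajt.
  by apply: contra mj; rewrite e => /eqP [->].
exact: (st_fair HP ms jI sS Ajs mis Pm rji).
Qed.

Lemma rejected_after_inv n :
  rejected_unstable (rejected_after n) /\ rejection_supported (rejected_after n).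
Proof.
elim: n => [|n [unst supp]]; first by split => i s; rewrite inE.
by split; [apply: unstable_step|apply: supported_step].
Qed.

Lemma rejected_after_card n :
  (forall k, k < n -> ~~ (rejections (rejected_after k) \subset rejected_after k)) ->
  n <= #|rejected_after n|.
Proof.
elim: n => // n IH h.
have h1 : n <= #|rejected_after n| by apply: IH => k kn; apply: h; apply: ltnW.
apply: leq_ltn_trans h1 _; apply: proper_card; apply/properP; split; first exact: subsetUl.
have := h n (ltnSn n); case/subsetPn => p pr' pn; exists p => //.
by rewrite inE pr' orbT.
Qed.

Lemma da_fixpoint : exists R,
  [/\ rejected_unstable R, rejection_supported R & rejections R = set0].
Proof.
have [k hk] : exists k : 'I_#|{: I * S}|.+1,
    rejections (rejected_after k) \subset rejected_after k.
  apply/existsP; apply/contraT => /existsPn h.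
  have := rejected_after_card (n := #|{: I * S}|.+1) (fun k kn => h (Ordinal kn)).
  by rewrite ltnNge max_card.
exists (rejected_after k); case: (rejected_after_inv k) => unst supp; split => //.
apply/eqP; rewrite -subset0; apply/subsetP => p pr'.
by move: (rejections_new pr'); rewrite (subsetP hk p pr').
Qed.

Section Outcome.
Variable R : {set I * S}.
Hypotheses (unst : rejected_unstable R) (supp : rejection_supported R).
Hypothesis no_rej : rejections R = set0.

Definition da_matching : {ffun I -> option S} := [ffun i => proposal R i].

Lemma da_load_set s : [set i in Is | da_matching i == Some s] = proposers R s.
Proof.
apply/setP => i; rewrite !inE ffunE; case e: (proposal R i) => [t|]; last by rewrite andbF.
by move: (proposal_acc e) => /and5P[-> _ _ _ _].
Qed.

Lemma da_cap s : load Is da_matching s <= q s.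
Proof.
rewrite /load da_load_set leqNgt; apply/negP => lt.
have: 0 < #|proposers R s| by apply: leq_ltn_trans lt.
rewrite card_gt0 => /set0Pn [j0 j0X].
have po : partial_order (pr s) by case: (Hpr s).
(* the lowest-priority proposer would have been rejected *)
case: (exists_least po (to_tot (Hpr s)) (X := fun x => x \in proposers R s) j0X) => j jX hj.
suff: (j, s) \in rejections R by rewrite no_rej inE.
rewrite inE /=; move: (jX); rewrite inE => -> /=.
rewrite -ltnS; apply: leq_trans lt _.
rewrite (cardsD1 j (proposers R s)) jX add1n ltnS; apply: subset_leq_card; apply/subsetP => k.
by move=> /setD1P [nkj kX]; rewrite inE kX /=; exact: hj.
Qed.

Lemma da_envy_rejected i s : i \in Is -> s \in Ss -> A i s ->
  P i (Some s) (da_matching i) -> (i, s) \in R.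
Proof.
rewrite ffunE => iI sS Ais Pis; apply/negPn/negP => nR.
have a : acceptable R i s.
  rewrite /acceptable iI sS Ais nR andbT /=.
  move: Pis; case e: (proposal R i) => [t|] // Pst.
  by move: (proposal_acc e) => /and5P[_ _ _ Pt _]; exact: (P_trans HP) Pst Pt.
by move: (Rw_notP HP (proposal_opt a)); rewrite Pis.
Qed.

Lemma da_stable : stable_in da_matching.
Proof.
split; first split.
- by move=> i ni; rewrite ffunE; case e: (proposal R i) => [s|] //;
    move: (proposal_acc e) => /and5P[]; rewrite (negbTE ni).
- by move=> i s; rewrite ffunE => /proposal_acc /and5P[].
- by move=> s _; exact: da_cap.
- by move=> i s _; rewrite ffunE => /proposal_acc /and5P[].
- move=> i s iI sS Ais Pis; apply/eqP; rewrite eqn_leq da_cap /=.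
  apply: leq_trans (supp (da_envy_rejected iI sS Ais Pis)) _.
  rewrite /load da_load_set; apply: subset_leq_card; apply/subsetP => k.
  by rewrite inE => /andP[].
- move=> i j s iI jI sS Ais djs dis Rw' rij.
  have dis' : Some s != da_matching i by rewrite eq_sym.
  have iR := da_envy_rejected iI sS Ais (Rw_P Rw' dis').
  have := supp iR; set T := [set _ in _ | _] => hT.
  suff: #|T| < load Is da_matching s by rewrite ltnNge (leq_trans (da_cap s) hT).
  have js : j \in proposers R s by rewrite inE -djs ffunE.
  rewrite /load da_load_set (cardsD1 j (proposers R s)) js add1n ltnS.
  apply: subset_leq_card; apply/subsetP => k; rewrite !inE => /andP[kX rki].
  rewrite kX andbT; apply/eqP => e; move: rki; rewrite e.
  by move/(to_asym (Hpr s)); rewrite rij.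
Qed.

Lemma da_optimal m : stable_in m -> forall i, Rw P i (da_matching i) (m i).
Proof.
move=> ms i; rewrite ffunE; case e: (m i) => [t|].
  apply: proposal_opt.
  rewrite /acceptable (st_Is ms e) (st_Ss ms e) (st_A ms e) (st_PN ms e) /=.
  by apply/negP => itR; move: (unst itR ms); rewrite e eqxx.
case e': (proposal R i) => [s|]; last exact: Rw_refl.
by move: (proposal_acc e') => /and5P[_ _ _ Ps _]; apply: P_Rw.
Qed.
End Outcome.

Lemma student_optimal_stable : exists d, stable_in d /\
  forall m, stable_in m -> forall i, Rw P i (d i) (m i).
Proof.
case: da_fixpoint => R [unst supp no_rej].
by exists (da_matching R); split; [apply: da_stable|apply: da_optimal].
Qed.

Lemma SOSM_optimal m : sub_SOSM P q pr Is Ss A m ->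
  forall m2, stable_in m2 -> forall i, Rw P i (m i) (m2 i).
Proof.
case=> ms nd m2 m2s i; case: student_optimal_stable => d [ds dopt].
suff -> : m = d by apply: dopt.
apply/ffunP => k; apply/eqP; apply/negPn/negP => nk.
apply: (nd d ds); split; first by move=> k' _; apply: dopt.
exists k; last by apply: Rw_P; [apply: dopt|rewrite eq_sym].
apply/negPn/negP => nkI.
by move: nk; rewrite (st_out ms nkI) (st_out ds nkI).
Qed.

Lemma SOSM_exists : exists m, sub_SOSM P q pr Is Ss A m.
Proof.
case: student_optimal_stable => d [ds dopt]; exists d; split => // m ms [_ [i _ Pi]].
by move: (Rw_notP HP (dopt m ms i)); rewrite Pi.
Qed.
End DeferredAcceptance.

Definition restr (I S : finType) (Ir : {set I}) (m : {ffun I -> option S}) :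
  {ffun I -> option S} := [ffun i => if i \in Ir then m i else None].
Definition fixedload (I S : finType) (Ir : {set I}) (nu : {ffun I -> option S}) s :=
  #|[set k | (k \notin Ir) && (nu k == Some s)]|.

(* At the start of a round the open students Ir and schools Sr, the allowed
   lists A, the previous matching mu and the fixed assignments nu satisfy an
   invariant describing, in terms of the original priorities, why fixed students
   are fixed and why schools were deleted from lists. *)
Section Run.
Variables (I S : finType) (P : I -> rel (option S)) (q : S -> nat).
Hypothesis HP : forall i, total_order (P i).
Variables (pri pr : S -> rel I).
Hypothesis Hpri : forall s, partial_order (pri s).
Hypothesis Hpr : forall s, total_order (pr s).
Hypothesis Hsub : forall s i j, pri s i j -> pr s i j.

Lemma pri_trans s i j k : pri s i j -> pri s j k -> pri s i k.
Proof. by case: (Hpri s) => _ t; apply: t. Qed.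

Record run_invariant (Ir : {set I}) (Sr : {set S}) (A : I -> S -> bool)
    (mu nu : {ffun I -> option S}) : Prop := {
 fixed_closed : forall i s, i \notin Ir -> nu i = Some s -> s \notin Sr /\ P i (Some s) None;
 fixed_cap : forall s, s \notin Sr -> fixedload Ir nu s <= q s;
 fixed_envy_open : forall i s, i \notin Ir -> P i (Some s) (nu i) -> s \in Sr ->
   load Ir mu s = q s;
 fixed_envy_closed : forall i s, i \notin Ir -> P i (Some s) (nu i) -> s \notin Sr ->
   fixedload Ir nu s = q s;
 open_envy_closed : forall i s, i \in Ir -> s \notin Sr -> P i (Some s) (mu i) ->
   fixedload Ir nu s = q s;
 fixed_fair_fixed : forall j s i, j \notin Ir -> nu j = Some s -> i \notin Ir ->
   P i (Some s) (nu i) -> ~~ pri s i j;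
 fixed_fair_open : forall j s i, j \notin Ir -> nu j = Some s -> i \in Ir ->
   P i (Some s) (mu i) -> ~~ pri s i j;
 deletion_cause : forall j s, j \in Ir -> s \in Sr -> ~~ A j s ->
   exists2 i0, i0 \notin Ir & pri s i0 j && P i0 (Some s) (nu i0);
 deletion_forced : forall i j s, i \notin Ir -> j \in Ir -> s \in Sr ->
   P i (Some s) (nu i) -> pri s i j -> ~~ A j s
}.

Section Round.
Variables (Ir : {set I}) (Sr : {set S}) (A : I -> S -> bool) (mu nu : {ffun I -> option S}).
Hypothesis Hmu : sub_SOSM P q pr Ir Sr A mu.
Local Notation und := (underdemanded P Ir Sr A mu).
Local Notation rem := (removed P Ir Sr A mu).
Local Notation Ir' := (Ir :\: rem).
Local Notation Sr' := (Sr :\: und).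
Local Notation A' := (new_allowed P pri Ir Sr A mu).
Local Notation nu' := (fix_assign P Ir Sr A mu nu).

Lemma mu_stable : sub_stable P q pr Ir Sr A mu. Proof. by case: Hmu. Qed.

Lemma und_Sr s : s \in und -> s \in Sr.
Proof. by rewrite inE => /andP[]. Qed.
Lemma und_no_envy s i : s \in und -> i \in Ir -> A i s -> P i (Some s) (mu i) -> False.
Proof.
rewrite inE => /andP[_ /forall_inP h] iI Ais Pis.
by move: (h i iI); rewrite Ais Pis.
Qed.
Lemma und_intro s : s \in Sr ->
  (forall i, i \in Ir -> A i s -> P i (Some s) (mu i) -> False) -> s \in und.
Proof.
move=> sS h; rewrite inE sS /=; apply/forall_inP => i iI.
by apply/negP => /andP[a b]; apply: h iI a b.
Qed.
Lemma rem_Ir i : i \in rem -> i \in Ir.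
Proof. by rewrite inE => /andP[]. Qed.
Lemma rem_some i s : i \in rem -> mu i = Some s -> s \in und.
Proof. by rewrite inE => /andP[_ /orP[/eqP->//|/exists_inP [t tu /eqP]]] -> [<-]. Qed.
Lemma rem_none i : i \in Ir -> mu i = None -> i \in rem.
Proof. by move=> iI e; rewrite inE iI e eqxx. Qed.
Lemma rem_und i s : i \in Ir -> mu i = Some s -> s \in und -> i \in rem.
Proof.
move=> iI e su; rewrite inE iI /=; apply/orP; right; apply/exists_inP; exists s => //.
by rewrite e.
Qed.
Lemma open'P i : (i \in Ir') = (i \in Ir) && (i \notin rem).
Proof. by rewrite inE andbC. Qed.
Lemma notopen'P i : (i \notin Ir') = (i \notin Ir) || (i \in rem).
Proof. by rewrite open'P negb_and negbK. Qed.
Lemma notSr'P s : (s \notin Sr') = (s \in und) || (s \notin Sr).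
Proof. by rewrite inE negb_and negbK. Qed.
Lemma open'_Ir i : i \in Ir' -> i \in Ir.
Proof. by rewrite open'P => /andP[]. Qed.
Lemma Sr'_Sr s : s \in Sr' -> s \in Sr.
Proof. by rewrite inE => /andP[]. Qed.
Lemma nu'E i : nu' i = if i \in rem then mu i else nu i.
Proof. by rewrite ffunE. Qed.
Lemma nu'_old i : i \notin Ir -> nu' i = nu i.
Proof. by move=> ni; rewrite nu'E; case: ifP => // ir; move: ni; rewrite (rem_Ir ir). Qed.
Lemma allowed'_le j s : A' j s -> A j s.
Proof. by case/andP. Qed.
Lemma allowed'_deleted j s : ~~ A' j s -> ~~ A j s \/
   exists2 i, i \in rem & [&& A i s, P i (Some s) (mu i) & pri s i j].
Proof.
rewrite /new_allowed negb_and => /orP[->|/forall_inPn [i ir h]]; first by left.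
by right; exists i => //; rewrite negbK in h.
Qed.

Lemma open'_matched i : i \in Ir' -> exists2 s, mu i = Some s & s \in Sr'.
Proof.
rewrite open'P => /andP[iI nr].
case e: (mu i) => [s|]; last by move: nr; rewrite rem_none.
exists s => //; rewrite inE (st_Ss mu_stable e) andbT.
by apply: contra nr; apply: rem_und.
Qed.

Lemma load_restr s : s \in Sr' -> load Ir' (restr Ir' mu) s = load Ir mu s.
Proof.
move=> sS'; apply: eq_card => i; rewrite [in LHS]inE [in RHS]inE ffunE open'P.
case: (boolP (i \in rem)) => ir /=; last by rewrite andbT; case: (i \in Ir).
rewrite andbF (rem_Ir ir) /=; apply/esym/negP => /eqP e.
by move: sS'; rewrite inE (rem_some ir e).
Qed.

(* The previous matching, restricted, is stable in the next subproblem: the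
   deletions only remove schools where the student has lower priority than
   someone who envies them, which stability of mu already excludes. *)
Lemma restr_stable : sub_stable P q pr Ir' Sr' A' (restr Ir' mu).
Proof.
have rE i : restr Ir' mu i = if i \in Ir' then mu i else None by rewrite ffunE.
split; first split.
- by move=> i; rewrite rE => /negbTE ->.
- by move=> i s; rewrite rE; case: ifP => // /open'_matched [t -> tS] [<-].
- by move=> s sS'; rewrite load_restr //; apply: st_cap mu_stable (Sr'_Sr sS').
- move=> i s; rewrite rE => iI'; rewrite iI' => e; split; last exact: st_PN mu_stable e.
  rewrite /new_allowed (st_A mu_stable e) /=; apply/forall_inP => k kr.
  apply/negP => /and3P[Aks Pks rki].
  exact: (st_fair HP mu_stable (rem_Ir kr) (st_Ss mu_stable e) Aks e Pks (Hsub rki)).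
- move=> i s iI' sS' Ais; rewrite rE iI' => Pis; rewrite load_restr //.
  exact: st_nw mu_stable (open'_Ir iI') (Sr'_Sr sS') (allowed'_le Ais) Pis.
- move=> i j s iI' jI' sS' Ais; rewrite !rE iI' jI' => mj ni Rwi rij.
  apply: (st_fair HP mu_stable (open'_Ir iI') (Sr'_Sr sS') (allowed'_le Ais) mj _ rij).
  by apply: Rw_P Rwi _; rewrite eq_sym.
Qed.

Section NextMatching.
Variable mu' : {ffun I -> option S}.
Hypothesis Hmu' : sub_SOSM P q pr Ir' Sr' A' mu'.

Lemma mu'_improves i : i \in Ir' -> Rw P i (mu' i) (mu i).
Proof.
move=> iI'; have := SOSM_optimal HP Hpr Hmu' restr_stable i.
by rewrite ffunE iI'.
Qed.

Lemma mu'_envy i s : i \in Ir' -> P i (Some s) (mu' i) -> P i (Some s) (mu i).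
Proof. by move=> iI' h; apply: (P_Rw_trans HP h); apply: mu'_improves. Qed.

Lemma load_mu' s : s \in Sr' -> load Ir' mu' s = load Ir mu s.
Proof.
move=> sS'; rewrite -load_restr //; apply: (load_eq HP restr_stable) => //.
  by case: Hmu'.
by move=> i iI'; rewrite ffunE iI'; apply: mu'_improves.
Qed.
End NextMatching.

Hypothesis Hinv : run_invariant Ir Sr A mu nu.

Lemma open_envy_full i s : i \in Ir -> s \in Sr -> P i (Some s) (mu i) ->
  load Ir mu s = q s.
Proof.
move=> iI sS Pis; case: (boolP (A i s)) => Ais; first exact: st_nw mu_stable iI sS Ais Pis.
case: (deletion_cause Hinv iI sS Ais) => i0 ni0 /andP[_ P0].
exact: (fixed_envy_open Hinv ni0 P0 sS).
Qed.

Lemma fixed'_envy_full i s : i \notin Ir' -> P i (Some s) (nu' i) -> s \in Sr ->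
  load Ir mu s = q s.
Proof.
rewrite notopen'P => /orP[ni|ir].
  by rewrite nu'_old // => Pi sS; apply: (fixed_envy_open Hinv ni Pi sS).
by rewrite nu'E ir => Pi sS; exact: (open_envy_full (rem_Ir ir) sS Pi).
Qed.

Lemma fixedload_und s : s \in und -> fixedload Ir' nu' s = load Ir mu s.
Proof.
move=> su; apply: eq_card => k; rewrite [in LHS]inE [in RHS]inE notopen'P nu'E.
case: (boolP (k \in rem)) => kr /=; first by rewrite orbT (rem_Ir kr).
case: (boolP (k \in Ir)) => kI /=.
  by apply/esym/negP => /eqP e; move: kr; rewrite (rem_und kI e su).
apply/negP => /eqP e; case: (fixed_closed Hinv kI e) => ns _.
by move: ns; rewrite (und_Sr su).
Qed.

Lemma fixedload_old s : s \notin Sr -> fixedload Ir' nu' s = fixedload Ir nu s.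
Proof.
move=> ns; apply: eq_card => k; rewrite [in LHS]inE [in RHS]inE notopen'P nu'E.
case: (boolP (k \in rem)) => kr /=; last by rewrite orbF.
rewrite orbT (rem_Ir kr) /=.
by apply/negP => /eqP e; move: ns; rewrite (st_Ss mu_stable e).
Qed.

Lemma fixed'_fair j s i : j \notin Ir' -> nu' j = Some s ->
  (i \notin Ir) && P i (Some s) (nu i) || (i \in Ir) && P i (Some s) (mu i) ->
  ~~ pri s i j.
Proof.
rewrite notopen'P => /orP[nj|jr].
  rewrite nu'_old // => e /orP[/andP[ni Pi]|/andP[iI Pi]].
    exact: (fixed_fair_fixed Hinv nj e ni Pi).
  exact: (fixed_fair_open Hinv nj e iI Pi).
rewrite nu'E jr => e.
have jI := rem_Ir jr; have su := rem_some jr e; have sS := und_Sr su.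
have Ajs := st_A mu_stable e.
case/orP=> [/andP[ni Pi]|/andP[iI Pi]]; apply/negP => pij.
  by move: (deletion_forced Hinv ni jI sS Pi pij); rewrite Ajs.
have nAi : ~~ A i s by apply/negP => Ai; apply: (und_no_envy su iI Ai Pi).
case: (deletion_cause Hinv iI sS nAi) => i0 ni0 /andP[p0 P0].
by move: (deletion_forced Hinv ni0 jI sS P0 (pri_trans p0 pij)); rewrite Ajs.
Qed.

Lemma deletion_forced' i j s : i \notin Ir' -> j \in Ir' -> s \in Sr' ->
  P i (Some s) (nu' i) -> pri s i j -> ~~ A' j s.
Proof.
rewrite notopen'P => /orP[ni|ir] jI' sS' Pi pij.
  rewrite nu'_old // in Pi; apply: contra (allowed'_le (s := s) (j := j)) _.
  exact: (deletion_forced Hinv ni (open'_Ir jI') (Sr'_Sr sS') Pi pij).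
rewrite nu'E ir in Pi; case: (boolP (A i s)) => Ais.
  rewrite /new_allowed negb_and; apply/orP; right; apply/forall_inPn.
  by exists i => //; rewrite Ais Pi pij.
case: (deletion_cause Hinv (rem_Ir ir) (Sr'_Sr sS') Ais) => i0 ni0 /andP[p0 P0].
apply: contra (allowed'_le (s := s) (j := j)) _.
exact: (deletion_forced Hinv ni0 (open'_Ir jI') (Sr'_Sr sS') P0 (pri_trans p0 pij)).
Qed.

Lemma run_invariant_step mu' : sub_SOSM P q pr Ir' Sr' A' mu' ->
  run_invariant Ir' Sr' A' mu' nu'.
Proof.
move=> Hmu'; split.
- move=> i s; rewrite notopen'P => /orP[ni|ir].
    rewrite nu'_old // => e; case: (fixed_closed Hinv ni e) => ns Ps; split => //.
    by apply: contra ns; apply: Sr'_Sr.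
  rewrite nu'E ir => e; split; last exact: st_PN mu_stable e.
  by rewrite notSr'P (rem_some ir e).
- move=> s; rewrite notSr'P => /orP[su|ns].
    by rewrite fixedload_und //; apply: st_cap mu_stable (und_Sr su).
  by rewrite fixedload_old //; apply: (fixed_cap Hinv ns).
- move=> i s ni Pi sS'; rewrite load_mu' //.
  exact: fixed'_envy_full ni Pi (Sr'_Sr sS').
- move=> i s ni Pi; rewrite notSr'P => /orP[su|ns].
    by rewrite fixedload_und //; apply: fixed'_envy_full ni Pi (und_Sr su).
  rewrite fixedload_old //; move: ni Pi; rewrite notopen'P => /orP[ni|ir].
    by rewrite nu'_old // => Pi; apply: (fixed_envy_closed Hinv ni Pi ns).
  by rewrite nu'E ir => Pi; apply: (open_envy_closed Hinv (rem_Ir ir) ns Pi).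
- move=> i s iI'; rewrite notSr'P => /orP[su|ns] Pi; have Pm := mu'_envy Hmu' iI' Pi.
    by rewrite fixedload_und //; apply: open_envy_full (open'_Ir iI') (und_Sr su) Pm.
  by rewrite fixedload_old //; apply: (open_envy_closed Hinv (open'_Ir iI') ns Pm).
- move=> j s i nj e ni Pi; apply: fixed'_fair nj e _.
  move: ni Pi; rewrite notopen'P => /orP[ni|ir].
    by rewrite nu'_old // => Pi; rewrite ni Pi.
  by rewrite nu'E ir (rem_Ir ir) => Pi; rewrite Pi orbT.
- move=> j s i nj e iI' Pi; apply: fixed'_fair nj e _.
  by rewrite (open'_Ir iI') (mu'_envy Hmu' iI' Pi) orbT.
- move=> j s jI' sS' nA; case: (allowed'_deleted nA) => [nA0|[i ir /and3P[_ Pi pij]]].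
    case: (deletion_cause Hinv (open'_Ir jI') (Sr'_Sr sS') nA0) => i0 ni0 /andP[p0 P0].
    by exists i0; rewrite ?notopen'P ?ni0 // nu'_old // p0 P0.
  by exists i; rewrite ?notopen'P ?ir ?orbT // nu'E ir pij Pi.
- by move=> i j s; apply: deletion_forced'.
Qed.
End Round.

Lemma fixed_full_excludes (Ir : {set I}) (nu lam : {ffun I -> option S}) i s :
  stable P q pri lam -> i \in Ir -> lam i = Some s ->
  (forall k, k \notin Ir -> lam k = nu k) -> fixedload Ir nu s = q s -> False.
Proof.
move=> ls iI li off fl.
have := st_cap ls (in_setT s); rewrite leqNgt; move/negP; apply.
rewrite -fl /load [X in _ < X](cardsD1 i) !inE li eqxx add1n ltnS.
apply: subset_leq_card; apply/subsetP => k; rewrite !inE => /andP[nk /eqP nks].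
rewrite (off k nk) nks eqxx; apply/andP; split => //.
by apply/eqP => e; move: nk; rewrite e iI.
Qed.

Definition run_outcome (Ir : {set I}) (mu nu res : {ffun I -> option S}) :=
  [/\ stable P q pri res,
      (forall i, i \in Ir -> Rw P i (res i) (mu i)),
      (forall i, i \notin Ir -> res i = nu i) &
      (forall lam, stable P q pri lam -> (forall i, Rw P i (lam i) (res i)) ->
         (forall i, i \notin Ir -> lam i = nu i) -> lam = res)].

(* When no school remains open, the open students are unassigned. *)
Lemma stop_outcome Ir Sr A mu nu : Sr = set0 ->
  sub_SOSM P q pr Ir Sr A mu -> run_invariant Ir Sr A mu nu ->
  run_outcome Ir mu nu [ffun i => if i \in Ir then mu i else nu i].
Proof.
move=> Sr0 Hmu Hinv; have ms := mu_stable Hmu.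
have nS s : s \notin Sr by rewrite Sr0 inE.
have muN i : mu i = None.
  by case e: (mu i) => [s|] //; move: (nS s); rewrite (st_Ss ms e).
set res := [ffun i => _].
have resE i : res i = if i \in Ir then None else nu i by rewrite ffunE muN.
have loadE s : load setT res s = fixedload Ir nu s.
  by apply: eq_card => k; rewrite !inE resE; case: (k \in Ir).
split.
- split; first split.
  + by move=> i; rewrite in_setT.
  + by move=> i s _; rewrite in_setT.
  + by move=> s _; rewrite loadE; apply: (fixed_cap Hinv (nS s)).
  + move=> i s _; rewrite resE; case: ifP => // iI e; split => //.
    by case: (fixed_closed Hinv (negbT iI) e).
  + move=> i s _ _ _; rewrite resE loadE; case: ifP => iI Pi.
      by apply: (open_envy_closed Hinv iI (nS s)); rewrite muN.
    exact: (fixed_envy_closed Hinv (negbT iI) Pi (nS s)).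
  + move=> i j s _ _ _ _; rewrite !resE; case: ifP => // jI e ne Rwi pij.
    have : P i (Some s) (if i \in Ir then None else nu i) by apply: Rw_P Rwi _; rewrite eq_sym.
    case: ifP => iI Pi'.
      by move: (fixed_fair_open Hinv (negbT jI) e iI); rewrite muN Pi' pij => /(_ isT).
    by move: (fixed_fair_fixed Hinv (negbT jI) e (negbT iI) Pi'); rewrite pij.
- by move=> i iI; rewrite resE iI muN; apply: Rw_refl.
- by move=> i ni; rewrite resE (negbTE ni).
- move=> lam ls lR off; apply/ffunP => i; case: (boolP (i \in Ir)) => iI; last first.
    by rewrite off // resE (negbTE iI).
  rewrite resE iI; case e: (lam i) => [s|] //; exfalso.
  have Pi : P i (Some s) (mu i).
    by rewrite muN; move: (lR i); rewrite e resE iI => h; apply: Rw_P h _.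
  exact: fixed_full_excludes ls iI e off (open_envy_closed Hinv iI (nS s) Pi).
Qed.

Section WeakImprovement.
Variables (Ir : {set I}) (Sr : {set S}) (A : I -> S -> bool).
Variables (mu nu lam : {ffun I -> option S}).
Hypotheses (Hmu : sub_SOSM P q pr Ir Sr A mu) (Hinv : run_invariant Ir Sr A mu nu).
Hypothesis lam_stable : stable P q pri lam.
Hypothesis lam_improves : forall i, i \in Ir -> Rw P i (lam i) (mu i).
Hypothesis lam_fixed : forall k, k \notin Ir -> lam k = nu k.
Local Notation ms := (mu_stable Hmu).

Lemma lam_open i s : i \in Ir -> lam i = Some s -> s \in Sr.
Proof.
move=> iI e; apply/negPn/negP => ns.
have Pi : P i (Some s) (mu i).
  apply: Rw_P; first by rewrite -e; apply: lam_improves.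
  by apply/eqP => e'; move: ns; rewrite (st_Ss ms (esym e')).
exact: fixed_full_excludes lam_stable iI e lam_fixed (open_envy_closed Hinv iI ns Pi).
Qed.

(* Moving to a school not deleted from one's list: a deletion witness would
   have justified envy in lam. *)
Lemma lam_allowed i s : i \in Ir -> lam i = Some s -> Some s != mu i -> A i s.
Proof.
move=> iI e ne; apply/negPn/negP => nA.
case: (deletion_cause Hinv iI (lam_open iI e) nA) => i0 ni0 /andP[p0 P0].
rewrite -lam_fixed // in P0.
exact: (st_fair HP lam_stable (in_setT i0) (in_setT s) (isT : allA i0 s) e P0 p0).
Qed.

Lemma lam_newcomer_full k s : k \in Ir -> s \in Sr -> lam k = Some s -> mu k != Some s ->
  load Ir mu s = q s /\ A k s /\ P k (Some s) (mu k).
Proof.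
move=> kI sS lk nk; have nk' : Some s != mu k by rewrite eq_sym.
have Pk : P k (Some s) (mu k) by apply: Rw_P nk'; rewrite -lk; apply: lam_improves.
have Aks := lam_allowed kI lk nk'.
by split; [exact: st_nw ms kI sS Aks Pk|].
Qed.

Lemma lam_load_le s : s \in Sr -> load Ir lam s <= load Ir mu s.
Proof.
move=> sS; rewrite leqNgt; apply/negP => lt.
case: (load_le_or_newcomer lt) => k kI /andP[/eqP lk nk].
case: (lam_newcomer_full kI sS lk nk) => full _.
move: (st_cap lam_stable (in_setT s)); rewrite leqNgt -full; apply/negP/negPn.
apply: leq_trans lt _; apply: subset_leq_card; apply/subsetP => x.
by rewrite !inE => /andP[_ ->].
Qed.

(* Nobody matched in mu becomes unmatched, so loads are preserved. *)
Lemma lam_load_eq s : s \in Sr -> load Ir lam s = load Ir mu s.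
Proof.
move=> sS; apply: (sum_le_eq lam_load_le) sS.
rewrite (sum_load (fun i t _ => st_Ss ms (i := i) (s := t))) (sum_load lam_open).
apply: subset_leq_card; apply/subsetP => i; rewrite !inE => /andP[iI mi]; rewrite iI /=.
by apply: contra mi => /eqP e; apply/eqP; exact: (st_matched HP ms (lam_improves iI) e).
Qed.

Lemma lam_matched_set : [set i in Ir | mu i != None] = [set i in Ir | lam i != None].
Proof.
have sl : \sum_(s in Sr) load Ir lam s = #|[set i in Ir | lam i != None]|.
  by apply: sum_load => i s iI; apply: lam_open.
have sm : \sum_(s in Sr) load Ir mu s = #|[set i in Ir | mu i != None]|.
  by apply: sum_load => i s _; apply: st_Ss ms.
apply/eqP; rewrite eqEcard -sl -sm (eq_bigr _ (fun s sS => lam_load_eq sS)) leqnn andbT.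
apply/subsetP => i; rewrite !inE => /andP[iI mi]; rewrite iI /=.
by apply: contra mi => /eqP li; apply/eqP; exact: (st_matched HP ms (lam_improves iI) li).
Qed.

Lemma lam_removed i : i \in removed P Ir Sr A mu -> lam i = mu i.
Proof.
move=> ir; have iI := rem_Ir ir.
case e: (mu i) => [s|]; last first.
  apply/eqP; apply/contraT => ne.
  have : i \in [set i in Ir | lam i != None] by rewrite inE iI.
  by rewrite -lam_matched_set inE e eqxx andbF.
have su := rem_some ir e; have sS := und_Sr su.
apply/eqP; apply/contraT => ne; exfalso.
(* s keeps its load, so someone moves into the underdemanded school s *)
have [k kI /andP[/eqP lk nk]] : exists2 k, k \in Ir & (lam k == Some s) && (mu k != Some s).
  apply/exists_inP; apply/contraT => /exists_inPn h.
  have sub : [set k in Ir | lam k == Some s] \proper [set k in Ir | mu k == Some s].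
    apply/properP; split.
      apply/subsetP => x; rewrite !inE => /andP[xI lx]; rewrite xI /=.
      by move: (h x xI); rewrite lx /= negbK.
    by exists i; rewrite !inE ?iI ?e ?eqxx //=; rewrite e in ne.
  by move: (proper_card sub); rewrite -/(load Ir lam s) -/(load Ir mu s) (lam_load_eq sS) ltnn.
case: (lam_newcomer_full kI sS lk nk) => _ [Aks Pk].
exact: (und_no_envy su kI Aks Pk).
Qed.
End WeakImprovement.

Lemma ea_outcome Ir Sr A mu nu res :
  ea_from P q pri pr Ir Sr A mu nu res ->
  sub_SOSM P q pr Ir Sr A mu -> run_invariant Ir Sr A mu nu ->
  run_outcome Ir mu nu res.
Proof.
elim=> {Ir Sr A mu nu res} [Ir Sr A mu nu Sr0|Ir Sr A mu nu mu' res _ Hmu' _ IH] Hmu Hinv.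
  exact: stop_outcome Sr0 Hmu Hinv.
have [rs rR roff rmax] := IH Hmu' (run_invariant_step Hmu Hinv Hmu').
set rem := removed P Ir Sr A mu in Hmu' IH rR roff rmax *.
have resR i : i \in Ir -> Rw P i (res i) (mu i).
  move=> iI; case: (boolP (i \in rem)) => ir.
    rewrite roff; last by rewrite inE ir.
    by rewrite nu'E ir; apply: Rw_refl.
  have iI' : i \in Ir :\: rem by rewrite inE ir.
  exact: (Rw_trans HP (rR i iI') (mu'_improves Hmu Hmu' iI')).
split => //.
- by move=> i ni; rewrite roff ?nu'_old // inE negb_and ni orbT.
- move=> lam ls lR off.
  have lRm i : i \in Ir -> Rw P i (lam i) (mu i).
    by move=> iI; apply: (Rw_trans HP (lR i) (resR i iI)).
  apply: rmax => // i; rewrite notopen'P => /orP[ni|ir]; first by rewrite nu'_old // off.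
  by rewrite nu'E ir (lam_removed Hmu Hinv ls lRm off ir).
Qed.
End Run.

(* Progress of EADAM: if a round removed neither students nor schools, then
   every open student is matched and every open school is envied by some allowed
   student.  Letting each school point to its top-priority envier, and that
   student to her school, yields a cycle along which trading gives a stable
   matching Pareto dominating the SOSM mu, which is impossible. *)
Section TradingCycle.
Variables (I S : finType) (P : I -> rel (option S)) (q : S -> nat).
Hypothesis HP : forall i, total_order (P i).
Variable pr : S -> rel I.
Hypothesis Hpr : forall s, total_order (pr s).
Variables (Ir : {set I}) (Sr : {set S}) (A : I -> S -> bool) (mu : {ffun I -> option S}).
Hypothesis Hmu : sub_SOSM P q pr Ir Sr A mu.
Hypothesis no_removed : removed P Ir Sr A mu = set0.
Hypothesis no_underdemanded : underdemanded P Ir Sr A mu = set0.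
Local Notation ms := (mu_stable Hmu).

Lemma all_matched i : i \in Ir -> exists2 t, mu i = Some t & t \in Sr.
Proof.
move=> iI; case e: (mu i) => [t|]; first by exists t => //; exact: st_Ss ms e.
by move: (rem_none P Sr A iI e); rewrite no_removed inE.
Qed.

Definition envier s i := [&& i \in Ir, A i s & P i (Some s) (mu i)].
Definition top_envier s i := envier s i && [forall k, envier s k ==> (k == i) || pr s i k].
Definition pointer s := [pick i | top_envier s i].
Definition next s := if pointer s is Some i then odflt s (mu i) else s.

Lemma pointerP s : s \in Sr -> exists2 i, pointer s = Some i & top_envier s i.
Proof.
move=> sS; rewrite /pointer; case: pickP => [i ti|none]; first by exists i.
have [i0 ei0] : exists i, envier s i.
  apply/existsP; apply/contraT => /existsPn h.
  suff : s \in underdemanded P Ir Sr A mu by rewrite no_underdemanded inE.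
  by apply: (und_intro sS) => i iI Ai Pi; move: (h i); rewrite /envier iI Ai Pi.
have po : partial_order (pr s) by case: (Hpr s).
case: (exists_greatest po (to_tot (Hpr s)) (X := envier s) ei0) => i ei hi.
move: (none i); rewrite /top_envier ei /= => /negP; case.
by apply/forallP => k; apply/implyP => ek; case: (eqVneq k i) => [->|nki] //=; rewrite hi.
Qed.

Lemma top_envier_open s i : top_envier s i -> i \in Ir.
Proof. by case/andP => /and3P[]. Qed.

Lemma mu_pointer s k : s \in Sr -> pointer s = Some k -> mu k = Some (next s).
Proof.
move=> sS ek; case: (pointerP sS) => k' ek' /top_envier_open kI.
rewrite ek in ek'; case: ek' => <- in kI *.
by rewrite /next ek; case: (all_matched kI) => t ->.
Qed.

Lemma next_Sr s : s \in Sr -> next s \in Sr.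
Proof.
move=> sS; case: (pointerP sS) => i ei /top_envier_open iI.
by rewrite /next ei; case: (all_matched iI) => t -> tS.
Qed.

Section Trade.
Variable E : {set S}.
Hypotheses (E_Sr : E \subset Sr) (E_neq0 : E != set0).
Hypotheses (E_inv : next @: E = E) (E_inj : {in E &, injective next}).

Lemma E_open s : s \in E -> s \in Sr. Proof. exact: (subsetP E_Sr). Qed.
Lemma next_E s : s \in E -> next s \in E.
Proof. by move=> sE; rewrite -E_inv; apply: imset_f. Qed.

Lemma pointer_inj s1 s2 : s1 \in E -> s2 \in E -> pointer s1 = pointer s2 -> s1 = s2.
Proof.
move=> h1 h2 ee; apply: E_inj => //.
case: (pointerP (E_open h1)) => k ek _.
have := mu_pointer (E_open h1) ek; rewrite ee in ek; rewrite (mu_pointer (E_open h2) ek).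
by case.
Qed.

Definition pointed k := [pick s | (s \in E) && (pointer s == Some k)].
Definition traded : {ffun I -> option S} :=
  [ffun k => if pointed k is Some s then Some s else mu k].

Lemma pointedS k s : pointed k = Some s -> s \in E /\ pointer s = Some k.
Proof. by rewrite /pointed; case: pickP => // x /andP[xE /eqP ex] [<-]. Qed.

Lemma pointed_top k s : pointed k = Some s -> top_envier s k.
Proof.
case/pointedS => sE es.
by case: (pointerP (E_open sE)) => i ei ti; rewrite es in ei; case: ei ti => ->.
Qed.

Lemma pointed_open k s : pointed k = Some s -> k \in Ir.
Proof. by move/pointed_top/top_envier_open. Qed.

Lemma pointed_some s : s \in E -> exists2 k, pointer s = Some k & pointed k = Some s.
Proof.
move=> sE; case: (pointerP (E_open sE)) => k ek _; exists k => //.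
rewrite /pointed; case: pickP => [s' /andP[s'E /eqP es']|none].
  by congr Some; apply: pointer_inj => //; rewrite es' ek.
by move: (none s); rewrite sE ek eqxx.
Qed.

Lemma tradedE k : traded k = if pointed k is Some s then Some s else mu k.
Proof. by rewrite ffunE. Qed.

Lemma traded_improves k : Rw P k (traded k) (mu k).
Proof.
rewrite tradedE; case h: (pointed k) => [s|]; last exact: Rw_refl.
by apply: P_Rw; move: (pointed_top h) => /andP[/and3P[_ _ ->]].
Qed.

Lemma traded_load_out t : t \notin E -> load Ir traded t = load Ir mu t.
Proof.
move=> tE; apply: eq_card => k; rewrite [in LHS]inE [in RHS]inE tradedE.
case h: (pointed k) => [s|] //; case: (pointedS h) => sE es.
rewrite (mu_pointer (E_open sE) es).
have -> : (Some s == Some t) = false by apply/negbTE; apply: contra tE => /eqP [<-].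
have -> : (Some (next s) == Some t) = false.
  by apply/negbTE; apply: contra tE => /eqP [<-]; apply: next_E.
by rewrite andbF.
Qed.

(* On E one student (the pointer of t) arrives and one (the pointer of its
   predecessor) leaves. *)
Lemma traded_load_in t : t \in E -> load Ir traded t = load Ir mu t.
Proof.
move=> tE; case: (pointed_some tE) => b eb pb.
have : t \in next @: E by rewrite E_inv.
case/imsetP => st stE tst; case: (pointed_some stE) => a ea pa.
have bX : b \in [set k in Ir | traded k == Some t].
  by rewrite inE tradedE pb (pointed_open pb) /= eqxx.
have aY : a \in [set k in Ir | mu k == Some t].
  by rewrite inE (mu_pointer (E_open stE) ea) (pointed_open pa) tst eqxx.
rewrite /load (cardsD1 b) bX (cardsD1 a [set k in Ir | mu k == Some t]) aY; congr (_ + _).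
apply: eq_card => k; rewrite !in_setD1 [in LHS]inE [in RHS]inE tradedE.
case h: (pointed k) => [s|]; last first.
  have -> : (k != b) = true by apply/negP => /eqP kb; move: h; rewrite kb pb.
  by have -> : (k != a) = true by apply/negP => /eqP kb; move: h; rewrite kb pa.
case: (pointedS h) => sE es.
apply/idP/idP => /and3P[nk kI /eqP e']; exfalso.
  by case: e' => st'; move: es; rewrite st' eb => -[ekb]; move: nk; rewrite ekb eqxx.
move: e'; rewrite (mu_pointer (E_open sE) es) tst => -[fs].
have ss := E_inj sE stE fs; move: es; rewrite ss ea => -[eka].
by move: nk; rewrite eka eqxx.
Qed.

Lemma traded_load t : load Ir traded t = load Ir mu t.
Proof. by case: (boolP (t \in E)); [apply: traded_load_in|apply: traded_load_out]. Qed.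

(* Stability: the new holder of s is its top envier, so nobody envies her. *)
Lemma traded_stable : sub_stable P q pr Ir Sr A traded.
Proof.
split; first split.
- move=> i ni; rewrite tradedE; case h: (pointed i) => [s|]; last exact: st_out ms ni.
  by move: ni; rewrite (pointed_open h).
- move=> i s; rewrite tradedE; case h: (pointed i) => [s'|]; last exact: st_Ss ms.
  by case=> <-; case: (pointedS h) => s'E _; apply: E_open.
- by move=> s sS; rewrite traded_load; apply: st_cap ms sS.
- move=> i s iI; rewrite tradedE; case h: (pointed i) => [s'|] e0; last first.
    by split; [exact: (st_A ms e0)|exact: (st_PN ms e0)].
  case: e0 => <-; move: (pointed_top h) => /andP[/and3P[_ Ai Pi] _]; split => //.
  case: (all_matched iI) => t e0 _; rewrite e0 in Pi.
  exact: (P_trans HP Pi (st_PN ms e0)).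
- move=> i s iI sS Ais Pi; rewrite traded_load; apply: st_nw ms iI sS Ais _.
  exact: (P_Rw_trans HP Pi (traded_improves i)).
- move=> i j s iI jI sS Ais mj mi Rwi pij.
  have Pi : P i (Some s) (traded i) by apply: Rw_P Rwi _; rewrite eq_sym.
  have Pm := P_Rw_trans HP Pi (traded_improves i).
  move: mj; rewrite tradedE; case h: (pointed j) => [s'|] mj; last first.
    exact: (st_fair HP ms iI sS Ais mj Pm pij).
  case: mj => ss'; rewrite ss' in h.
  move: (pointed_top h) => /andP[_ /forallP /(_ i)].
  rewrite /envier iI Ais Pm /= => /orP[/eqP eij|pji].
    by move: mi; rewrite eij tradedE h eqxx.
  by move: (to_asym (Hpr s) pji); rewrite pij.
Qed.

Lemma traded_dominates : sub_dominates P Ir traded mu.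
Proof.
split; first by move=> i _; apply: traded_improves.
case/set0Pn: E_neq0 => s0 s0E; case: (pointed_some s0E) => k ek pk0.
exists k; first exact: pointed_open pk0.
by rewrite tradedE pk0; move: (pointed_top pk0) => /andP[/and3P[_ _ ->]].
Qed.
End Trade.

Lemma no_trading_cycle : Sr = set0.
Proof.
apply/eqP; apply/contraT => Sr0.
case: (invariant_cycle next_Sr Sr0) => E [ES E0 fE finj].
case: Hmu => _ not_dominated.
by case: (not_dominated _ (traded_stable ES fE finj)); apply: traded_dominates ES E0 finj.
Qed.
End TradingCycle.

Lemma round_progress (I S : finType) (P : I -> rel (option S)) (q : S -> nat)
    (pr : S -> rel I) Ir Sr A (mu : {ffun I -> option S}) :
  (forall i, total_order (P i)) -> (forall s, total_order (pr s)) ->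
  sub_SOSM P q pr Ir Sr A mu -> Sr != set0 ->
  (removed P Ir Sr A mu != set0) || (underdemanded P Ir Sr A mu != set0).
Proof.
move=> HP Hpr Hmu Sr0; apply/contraT; rewrite negb_or !negbK => /andP[/eqP r0 /eqP u0].
by move: Sr0; rewrite (no_trading_cycle HP Hpr Hmu r0 u0) eqxx.
Qed.

Lemma run_exists (I S : finType) (P : I -> rel (option S)) (q : S -> nat)
    (pri pr : S -> rel I) :
  (forall i, total_order (P i)) -> (forall s, total_order (pr s)) ->
  forall n (Ir : {set I}) (Sr : {set S}) A (mu nu : {ffun I -> option S}),
  #|Ir| + #|Sr| <= n -> sub_SOSM P q pr Ir Sr A mu ->
  exists res, ea_from P q pri pr Ir Sr A mu nu res.
Proof.
move=> HP Hpr; elim=> [|n IH] Ir Sr A mu nu hn Hmu.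
  exists [ffun i => if i \in Ir then mu i else nu i]; apply: ea_stop.
  by apply/eqP; rewrite -cards_eq0; move: hn; rewrite leqn0 addn_eq0 => /andP[_].
case: (eqVneq Sr set0) => [S0|nS].
  by exists [ffun i => if i \in Ir then mu i else nu i]; apply: ea_stop.
set rem := removed P Ir Sr A mu; set und := underdemanded P Ir Sr A mu.
case: (SOSM_exists q HP (Ir :\: rem) (Sr :\: und) (new_allowed P pri Ir Sr A mu) Hpr)
  => mu' Hmu'.
have lt : #|Ir :\: rem| + #|Sr :\: und| < #|Ir| + #|Sr|.
  have l1 : #|Ir :\: rem| <= #|Ir| by apply: subset_leq_card; apply: subsetDl.
  have l2 : #|Sr :\: und| <= #|Sr| by apply: subset_leq_card; apply: subsetDl.
  case/orP: (round_progress HP Hpr Hmu nS) => /set0Pn [x xin].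
    suff h : #|Ir :\: rem| < #|Ir| by rewrite -addSn; apply: leq_add.
    apply: proper_card; apply/properP; split; first exact: subsetDl.
    by exists x; [apply: rem_Ir xin|rewrite inE xin].
  suff h : #|Sr :\: und| < #|Sr| by rewrite -addnS; apply: leq_add.
  apply: proper_card; apply/properP; split; first exact: subsetDl.
  by exists x; [apply: und_Sr xin|rewrite inE xin].
case: (IH _ _ _ _ (fix_assign P Ir Sr A mu nu) _ Hmu') => [|res hres].
  by rewrite -ltnS; apply: leq_trans lt hn.
by exists res; apply: ea_step nS Hmu' hres.
Qed.

(* Given stable matchings mu and nu for pri with nu weakly better than mu for
   every student, we build, for each school s, a strict partial order on students
   containing pri s, making every mu-holder of s precede every mu-envier of s
   (so it contains succ^mu_s) and every nu-holder of s precede every nu-envier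
   of s (so nu stays stable).  Its linearization is the required extension. *)
Section NuCompatiblePriority.
Variables (I S : finType) (P : I -> rel (option S)) (q : S -> nat).
Hypothesis HP : forall i, total_order (P i).
Variable pri : S -> rel I.
Hypothesis Hpri : forall s, partial_order (pri s).
Variables (mu nu : {ffun I -> option S}).
Hypotheses (Hmu : stable P q pri mu) (Hnu : stable P q pri nu).
Hypothesis nu_improves : forall i, Rw P i (nu i) (mu i).
Variable s : S.

Definition pri_eq x y := pri s x y || (x == y).
Definition above_mu_holder x := [exists a, (mu a == Some s) && pri_eq x a].
Definition above_nu_holder x := [exists a, (nu a == Some s) && pri_eq x a].
Definition below_mu_envier y := [exists b, P b (Some s) (mu b) && pri_eq b y].
Definition below_nu_envier y := [exists b, P b (Some s) (nu b) && pri_eq b y].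
Definition mu_envier_over_nu_holder :=
  [exists b, [exists c, [&& P b (Some s) (mu b), nu c == Some s & pri_eq b c]]].

Definition nu_priority : rel I := fun x y =>
  [|| pri s x y, above_mu_holder x && below_mu_envier y,
      above_nu_holder x && below_nu_envier y |
      [&& above_mu_holder x, mu_envier_over_nu_holder & below_nu_envier y]].

Lemma pri_eq_trans x y z : pri_eq x y -> pri_eq y z -> pri_eq x z.
Proof.
rewrite /pri_eq => /orP[h1|/eqP ->] // /orP[h2|/eqP <-]; last by rewrite h1.
by rewrite (pri_trans Hpri h1 h2).
Qed.

Lemma pri_eq_of x y : pri s x y -> pri_eq x y.
Proof. by rewrite /pri_eq => ->. Qed.

Lemma above_mu_holder_up x z : pri_eq x z -> above_mu_holder z -> above_mu_holder x.
Proof.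
by move=> h /existsP[a /andP[ma za]]; apply/existsP; exists a; rewrite ma (pri_eq_trans h za).
Qed.
Lemma above_nu_holder_up x z : pri_eq x z -> above_nu_holder z -> above_nu_holder x.
Proof.
by move=> h /existsP[a /andP[ma za]]; apply/existsP; exists a; rewrite ma (pri_eq_trans h za).
Qed.
Lemma below_mu_envier_down y z : below_mu_envier y -> pri_eq y z -> below_mu_envier z.
Proof.
by move=> /existsP[b /andP[mb by_]] h; apply/existsP; exists b; rewrite mb (pri_eq_trans by_ h).
Qed.
Lemma below_nu_envier_down y z : below_nu_envier y -> pri_eq y z -> below_nu_envier z.
Proof.
by move=> /existsP[b /andP[mb by_]] h; apply/existsP; exists b; rewrite mb (pri_eq_trans by_ h).
Qed.

Lemma stable_no_envy_above (m : {ffun I -> option S}) b a : stable P q pri m ->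
  P b (Some s) (m b) -> m a = Some s -> pri_eq b a -> False.
Proof.
move=> ms Pb ma; rewrite /pri_eq => /orP[pba|/eqP ba].
  exact: (st_fair HP ms (in_setT b) (in_setT s) (isT : allA b s) ma Pb pba).
by move: Pb; rewrite ba ma (negbTE (P_irr HP _ _)).
Qed.

Lemma not_mu_envier_mu_holder y : below_mu_envier y -> above_mu_holder y -> False.
Proof.
move=> /existsP[b /andP[Pb pby]] /existsP[a /andP[/eqP ma pya]].
exact: stable_no_envy_above Hmu Pb ma (pri_eq_trans pby pya).
Qed.
Lemma not_nu_envier_nu_holder y : below_nu_envier y -> above_nu_holder y -> False.
Proof.
move=> /existsP[b /andP[Pb pby]] /existsP[a /andP[/eqP ma pya]].
exact: stable_no_envy_above Hnu Pb ma (pri_eq_trans pby pya).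
Qed.
(* a nu-envier also envies s in mu, since nu is weakly better *)
Lemma not_nu_envier_mu_holder y : below_nu_envier y -> above_mu_holder y -> False.
Proof.
move=> /existsP[b /andP[Pb pby]] /existsP[a /andP[/eqP ma pya]].
exact: stable_no_envy_above Hmu (P_Rw_trans HP Pb (nu_improves b)) ma (pri_eq_trans pby pya).
Qed.
Lemma mu_envier_nu_holder_link y :
  below_mu_envier y -> above_nu_holder y -> mu_envier_over_nu_holder.
Proof.
move=> /existsP[b /andP[Pb pby]] /existsP[a /andP[ma pya]].
by apply/existsP; exists b; apply/existsP; exists a; rewrite Pb ma (pri_eq_trans pby pya).
Qed.

Lemma nu_priority_irr x : ~~ nu_priority x x.
Proof.
apply/negP; rewrite /nu_priority => /or4P[h|/andP[u d]|/andP[v d]|/and3P[u _ d]].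
- by case: (Hpri s) => asy _; move: (asy _ _ h); rewrite h.
- exact: not_mu_envier_mu_holder d u.
- exact: not_nu_envier_nu_holder d v.
- exact: not_nu_envier_mu_holder d u.
Qed.

Lemma nu_priority_trans x y z : nu_priority x y -> nu_priority y z -> nu_priority x z.
Proof.
rewrite /nu_priority => /or4P[h|/andP[u d]|/andP[v d]|/and3P[u k d]]
  /or4P[h'|/andP[u' d']|/andP[v' d']|/and3P[u' k' d']].
all: try by (exfalso; first [ exact: not_mu_envier_mu_holder d u'
                            | exact: not_nu_envier_nu_holder d v'
                            | exact: not_nu_envier_mu_holder d u']).
- by rewrite (pri_trans Hpri h h').
- by rewrite (above_mu_holder_up (pri_eq_of h) u') d' orbT.
- by rewrite (above_nu_holder_up (pri_eq_of h) v') d' !orbT.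
- by rewrite (above_mu_holder_up (pri_eq_of h) u') k' d' !orbT.
- by rewrite u (below_mu_envier_down d (pri_eq_of h')) orbT.
- by rewrite u (mu_envier_nu_holder_link d v') d' !orbT.
- by rewrite v (below_nu_envier_down d (pri_eq_of h')) !orbT.
- by rewrite u k (below_nu_envier_down d (pri_eq_of h')) !orbT.
Qed.

Lemma nu_priority_mu_profile i j : mu_profile P pri mu s i j -> nu_priority i j.
Proof.
rewrite /mu_profile /nu_priority => /orP[->//|/andP[mi Pj]].
apply/or4P; apply: Or42; apply/andP; split.
  by apply/existsP; exists i; rewrite mi /pri_eq eqxx orbT.
by apply/existsP; exists j; rewrite Pj /pri_eq eqxx orbT.
Qed.

Lemma nu_priority_nu i j : nu i = Some s -> P j (Some s) (nu j) -> nu_priority i j.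
Proof.
move=> ni Pj; rewrite /nu_priority; apply/or4P; apply: Or43; apply/andP; split.
  by apply/existsP; exists i; rewrite ni eqxx /pri_eq eqxx orbT.
by apply/existsP; exists j; rewrite Pj /pri_eq eqxx orbT.
Qed.
End NuCompatiblePriority.

Section Corollary.
Variables (I S : finType) (P : I -> rel (option S)) (q : S -> nat).
Hypothesis HP : forall i, total_order (P i).
Variable pri : S -> rel I.
Hypothesis Hpri : forall s, partial_order (pri s).

Lemma weakly_better_dominates (m m' : {ffun I -> option S}) :
  (forall i, Rw P i (m' i) (m i)) -> m' != m -> dominates P m' m.
Proof.
move=> better ne; split=> [i _|]; first exact: better.
have [i ni] : exists i, m' i != m i.
  by apply/existsP; apply: contraR ne => /existsPn h; apply/eqP/ffunP => i; apply/eqP/negPn.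
by exists i; [apply: in_setT|apply: Rw_P (better i) ni].
Qed.

Lemma stable_change_priority (pr pr' : S -> rel I) Is Ss A (m : {ffun I -> option S}) :
  sub_stable P q pr Is Ss A m ->
  (forall s i j, A i s -> m j = Some s -> P i (Some s) (m i) -> ~~ pr' s i j) ->
  sub_stable P q pr' Is Ss A m.
Proof.
case=> mat ir nw fair h; split => // i j s iI jI sS Ais mj mi Rwi pij.
have Pi : P i (Some s) (m i) by apply: Rw_P Rwi _; rewrite eq_sym.
by move: (h s i j Ais mj Pi); rewrite pij.
Qed.

Lemma run_invariant_init (pr : S -> rel I) (mu0 : {ffun I -> option S}) :
  run_invariant P q pri [set: I] [set: S] (@allA I S) mu0 [ffun => None].
Proof. by split=> [i s|s|i s|i s|i s _|j s i|j s i|//|i j s]; rewrite in_setT. Qed.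

Lemma EA_outcome (pr : S -> rel I) (res : {ffun I -> option S}) :
  (forall s, total_order (pr s)) -> (forall s i j, pri s i j -> pr s i j) ->
  EA P q pri pr res ->
  [/\ stable P q pri res,
      forall m, stable P q pr m -> forall i, Rw P i (res i) (m i) &
      forall lam, stable P q pri lam -> (forall i, Rw P i (lam i) (res i)) -> lam = res].
Proof.
move=> Hpr Hsub [mu0 [Hmu0 run]].
have [rs rR _ rmax] := ea_outcome HP Hpri Hpr Hsub run Hmu0 (run_invariant_init pr mu0).
split=> // [m ms i|lam ls lR].
  exact: (Rw_trans HP (rR i (in_setT i)) (SOSM_optimal HP Hpr Hmu0 ms i)).
by apply: rmax => // k; rewrite in_setT.
Qed.

Variables (mu : {ffun I -> option S}).
Hypothesis Hmu : stable P q pri mu.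

(* Inclusion from left to right: an SOSM nu weakly improving on mu is the EADAM
   outcome for the linearization of nu_priority. *)
Lemma SOSM_improvement_is_EA (nu : {ffun I -> option S}) :
  SOSM P q pri nu -> (forall i, Rw P i (nu i) (mu i)) ->
  exists pr, in_ext (mu_profile P pri mu) pr /\ EA P q pri pr nu.
Proof.
move=> [Hnu nu_not_dominated] nuR.
pose C s := nu_priority P pri mu nu s.
have C_trans s := @nu_priority_trans _ _ _ _ HP _ Hpri _ _ Hmu Hnu nuR s.
have C_irr s := @nu_priority_irr _ _ _ _ HP _ Hpri _ _ Hmu Hnu nuR s.
pose pr s := linearize (C s).
have Hpr s : total_order (pr s) by apply: linearize_total.
have Cpr s i j : C s i j -> pr s i j by apply: linearize_ext; [apply: C_trans|apply: C_irr].
have ext : in_ext (mu_profile P pri mu) pr.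
  by move=> s; split => // i j h; apply/Cpr/(nu_priority_mu_profile nu).
have Hsub s i j : pri s i j -> pr s i j.
  by move=> h; apply/Cpr/(nu_priority_mu_profile nu); rewrite /mu_profile h.
have Hnu' : stable P q pr nu.
  apply: stable_change_priority Hnu _ => s i j _ nj Pi; apply/negP => pij.
  by move: (to_asym (Hpr s) pij); rewrite (Cpr _ _ _ (nu_priority_nu pri mu nj Pi)).
case: (SOSM_exists q HP [set: I] [set: S] (@allA I S) Hpr) => mu0 Hmu0.
have [res run] := run_exists (q := q) pri HP Hpr [ffun => None] (leqnn _) Hmu0.
have EAres : EA P q pri pr res by exists mu0.
have [rs rbest _] := EA_outcome Hpr Hsub EAres.
have -> : nu = res.
  apply/eqP; apply/contraT => ne; case: (nu_not_dominated res rs).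
  by apply: weakly_better_dominates; [apply: rbest|rewrite eq_sym].
by exists pr.
Qed.

Lemma EA_is_SOSM_improvement (pr : S -> rel I) (nu : {ffun I -> option S}) :
  in_ext (mu_profile P pri mu) pr -> EA P q pri pr nu ->
  SOSM P q pri nu /\ forall i, Rw P i (nu i) (mu i).
Proof.
move=> ext EAnu.
have Hpr s : total_order (pr s) by case: (ext s).
have Hsub s i j : pri s i j -> pr s i j.
  by move=> h; case: (ext s) => _; apply; rewrite /mu_profile h.
have [rs rbest rmax] := EA_outcome Hpr Hsub EAnu.
(* mu is stable for pr, since pr puts mu-holders above mu-enviers *)
have Hmu' : stable P q pr mu.
  apply: stable_change_priority Hmu _ => s i j _ mj Pi; apply/negP => pij.
  have : pr s j i by case: (ext s) => _; apply; rewrite /mu_profile mj eqxx Pi orbT.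
  by move/(to_asym (Hpr s)); rewrite pij.
split=> [|i]; last exact: rbest.
split=> // m ms [better [i _ Pi]].
by move: Pi; rewrite (rmax m ms (fun k => better k (in_setT k))) (negbTE (P_irr HP _ _)).
Qed.
End Corollary.

Theorem corollary6 (I S : finType) (P : I -> rel (option S)) (q : S -> nat)
    (pri : S -> rel I) (mu : {ffun I -> option S}) :
  2 < #|I| ->
  (forall i, total_order (P i)) ->
  (forall s, 0 < q s) ->
  (forall s, partial_order (pri s)) ->
  stable P q pri mu ->
  forall nu : {ffun I -> option S},
    (SOSM P q pri nu /\ (in_d P q mu nu \/ nu = mu)) <->
    (exists pri' : S -> rel I,
        in_ext (mu_profile P pri mu) pri' /\ EA P q pri pri' nu).
Proof.
move=> _ HP _ Hpri Hmu nu; split.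
- case=> Hnu nu_mu; apply: SOSM_improvement_is_EA => // i.
  by case: nu_mu => [[_ [better _]]|->]; [exact: better (in_setT i)|exact: Rw_refl].
- case=> pr [ext EAnu].
  have [Hnu better] := EA_is_SOSM_improvement HP Hpri Hmu ext EAnu.
  split=> //; case: (eqVneq nu mu) => [->|ne]; [by right|left].
  split; first by case: Hnu => -[[]].
  exact: weakly_better_dominates.
Qed.
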